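(* Let $(G,R,\omega)$ be a metric RPP instance and $S$ an edge-minimizing Eulerian extension for it. Then every vertex $v\in V$ is incident to at most two edges of $S$ (counted with multiplicity).
   Context: An RPP instance is a triple $(G,R,\omega)$, where $G=(V,E)$ is an undirected multigraph, $\omega\colon E\to\mathbb{N}$ assigns weights (parallel edges have equal weight), and $R$ is a nonempty multiset of edges of $G$. The instance is metric if $G$ contains an edge between any two vertices and the weights satisfy the triangle inequality $\omega(\{u,w\})\le\omega(\{u,v\})+\omega(\{v,w\})$ for all $u,v,w\in V$. For a multiset $X$ of edges: - $\omega(X)$ and $|X|$ are the weight and cardinality counted with multiplicity; - $V(X)$ is the set of vertices incident to edges of $X$; - $G\langle X\rangle=(V(X),X)$ is the multigraph formed by $X$ (no isolated vertices); - $\uplus$ denotes multiset sum. A vertex is balanced in a multigraph if its degree is even (a loop counts 2), and imbalanced otherwise. A multigraph without isolated vertices is Eulerian if it is connected and all vertices are balanced. An Eulerian extension for $(G,R,\omega)$ is a multiset $S$ of edges of $G$ such that $G\langle R\uplus S\rangle$ is Eulerian. It is edge-minimizing if there is no Eulerian extension $S'$ with $|S'|<|S|$ and $\omega(S')\le\omega(S)$. *)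

From mathcomp Require Import all_boot.
Set Implicit Arguments. Unset Strict Implicit. Unset Printing Implicit Defensive.

(* An undirected multigraph G = (V,E): V and E finite types, each edge e has
   two endpoints [ends e] (an ordered pair used as an unordered pair; a loop
   has both components equal).
   Multisets of edges are sequences (order irrelevant): cardinality = size,
   multiset sum = concatenation. *)

Section RPP.
Variables (V E : finType) (ends : E -> V * V) (w : E -> nat).

Definition joins (e : E) (u v : V) : bool :=
  (ends e == (u, v)) || (ends e == (v, u)).

Definition parallel_equal_weight : Prop :=
  forall e f : E, joins e (ends f).1 (ends f).2 -> w e = w f.

Definition weight (X : seq E) : nat := \sum_(e <- X) w e.

Definition incident (e : E) (v : V) : bool :=
  ((ends e).1 == v) || ((ends e).2 == v).

(* degree of v in G<X>; a loop counts 2 *)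
Definition degree (X : seq E) (v : V) : nat :=
  \sum_(e <- X) (((ends e).1 == v) + ((ends e).2 == v)).

Definition inVX (X : seq E) (v : V) : bool := has (fun e => incident e v) X.

Definition adjX (X : seq E) : rel V := fun u v => has (fun e => joins e u v) X.

Definition eulerian (X : seq E) : Prop :=
  (forall u v, inVX X u -> inVX X v -> connect (adjX X) u v) /\
  (forall v, inVX X v -> ~~ odd (degree X v)).

Definition eulerian_extension (R S : seq E) : Prop := eulerian (R ++ S).

Definition edge_minimizing (R S : seq E) : Prop :=
  eulerian_extension R S /\
  ~ (exists S' : seq E, eulerian_extension R S' /\
       size S' < size S /\ weight S' <= weight S).

Definition metric : Prop :=
  (forall u v : V, u != v -> exists e : E, joins e u v) /\
  (forall (u v x : V) (e1 e2 e3 : E),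
      joins e1 u x -> joins e2 u v -> joins e3 v x -> w e1 <= w e2 + w e3).

End RPP.

From mathcomp Require Import all_boot zify.
Set Implicit Arguments. Unset Strict Implicit. Unset Printing Implicit Defensive.

(* Suppose e1, e2, e3 in S are incident to v, with opposite endpoints a1, a2,
   a3, and let Y be the rest of R ⊎ S.  A handshake argument in the connected
   component of v in G<Y> (degree sums over a component are even, while
   R ⊎ S is balanced and the three edges add an odd amount 3 at v) shows that
   some a_i, say a1, is already connected to v in G<Y>.  Then e1 and e2 can be
   replaced by a "bypass" of a1 and a2: nothing if a1 = a2, and otherwise the
   metric edge a1a2, which by the triangle inequality weighs at most
   w(e1) + w(e2).  The bypass keeps all parities and, since v ~ a1 in G<Y>,
   connectivity; it yields a strictly smaller, no heavier extension. *)

Section Multigraph.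
Variables (V E : finType) (ends : E -> V * V).

(* The endpoint of [e] other than [v] (meaningful when [e] is incident to [v]). *)
Definition opposite (v : V) (e : E) : V :=
  if (ends e).1 == v then (ends e).2 else (ends e).1.

Lemma joins_opposite e v :
  incident ends e v -> joins ends e v (opposite v e).
Proof.
rewrite /incident /joins /opposite; case: (ends e) => x y /=.
by case: eqP => [->|_] /= => [|/eqP->]; rewrite eqxx ?orbT.
Qed.

Lemma joins_degree e x y u :
  joins ends e x y ->
  ((ends e).1 == u) + ((ends e).2 == u) = (x == u) + (y == u).
Proof.
by rewrite /joins; case: (ends e) => a b /orP[] /eqP [-> ->] //=; rewrite addnC.
Qed.

Lemma joins_incident e x y u :
  joins ends e x y -> incident ends e u = (x == u) || (y == u).
Proof.
by rewrite /joins /incident; case: (ends e) => a b /orP[] /eqP [-> ->] //=;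
  rewrite orbC.
Qed.

Lemma joins_same_ends e x y a b :
  joins ends e x y -> joins ends e a b ->
  (a = x /\ b = y) \/ (a = y /\ b = x).
Proof.
rewrite /joins; case: (ends e) => p q.
by case/orP => /eqP [-> ->] /orP[] /eqP [-> ->]; tauto.
Qed.

Lemma joins_adjX X e a b : e \in X -> joins ends e a b -> adjX ends X a b.
Proof. by move=> eX jab; apply/hasP; exists e. Qed.

Lemma degree_cat A B u : degree ends (A ++ B) u = degree ends A u + degree ends B u.
Proof. by rewrite /degree big_cat. Qed.

Lemma degree_cons e A u :
  degree ends (e :: A) u = ((ends e).1 == u) + ((ends e).2 == u) + degree ends A u.
Proof. by rewrite /degree big_cons. Qed.

Lemma inVX_cat A B u : inVX ends (A ++ B) u = inVX ends A u || inVX ends B u.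
Proof. exact: has_cat. Qed.

(* In an Eulerian multigraph every vertex of V has even degree (isolated
   vertices have degree 0). *)
Lemma eulerian_degree_even X u : eulerian ends X -> ~~ odd (degree ends X u).
Proof.
move=> [_ balanced]; case Xu: (inVX ends X u); first exact: balanced.
move/negbT/hasPn: Xu => isolated; rewrite /degree big_seq big1 // => e /isolated.
by rewrite /incident negb_or => /andP[/negPf -> /negPf ->].
Qed.

Lemma eulerian_perm X Y : perm_eq X Y -> eulerian ends X -> eulerian ends Y.
Proof.
move=> pXY [conn bal]; have sameXY := perm_mem pXY.
have VXY u : inVX ends Y u = inVX ends X u by apply: eq_has_r.
have adjXY : adjX ends Y =2 adjX ends X by move=> a b; apply: eq_has_r.
split=> [u v|v]; rewrite !VXY; first by rewrite (eq_connect adjXY); exact: conn.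
by rewrite /degree -(perm_big _ pXY); exact: bal.
Qed.

Lemma adjX_sym X : symmetric (adjX ends X).
Proof. by move=> u v; apply: eq_has => e; rewrite /joins orbC. Qed.

Lemma connectC X a b : connect (adjX ends X) a b = connect (adjX ends X) b a.
Proof. exact: (sym_connect_sym (adjX_sym X)). Qed.

Lemma connect_subset A B a b :
  {subset A <= B} -> connect (adjX ends A) a b -> connect (adjX ends B) a b.
Proof.
move=> sAB; apply: connect_sub => x y /hasP[g gA jg].
by apply: connect1; apply: joins_adjX (sAB _ gA) jg.
Qed.

Lemma eulerian_replace X X' :
  eulerian ends X ->
  (forall u, inVX ends X' u -> inVX ends X u) ->
  (forall u, odd (degree ends X' u) = odd (degree ends X u)) ->
  (forall a b, adjX ends X a b -> connect (adjX ends X') a b) ->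
  eulerian ends X'.
Proof.
move=> [conn bal] sub par adj; split=> [u v /sub Xu /sub Xv|v /sub Xv].
  by move: (conn u v Xu Xv); apply: connect_sub.
by rewrite par; exact: bal.
Qed.

Lemma sum_indicator (T : finType) (P : pred T) (x : T) :
  \sum_(u | P u) (x == u) = P x.
Proof.
case Px: (P x).
  by rewrite (bigD1 x) //= eqxx big1 // => u /andP[_]; rewrite eq_sym => /negPf ->.
by rewrite big1 // => u Pu; case: eqP => // xu; move: Px; rewrite xu Pu.
Qed.

(* Handshake lemma for a connected component: its degree sum is even, since
   both endpoints of each edge lie in the same component. *)
Lemma handshake_component X x :
  ~~ odd (\sum_(u | connect (adjX ends X) x u) degree ends X u).
Proof.
set C := connect (adjX ends X) x.
have -> : \sum_(u | C u) degree ends X u = \sum_(e <- X) (C (ends e).1).*2.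
  rewrite /degree exchange_big /= big_seq [RHS]big_seq; apply: eq_bigr => e eX.
  rewrite big_split /= !sum_indicator -addnn.
  have adj_e : adjX ends X (ends e).1 (ends e).2.
    by apply: joins_adjX eX _; rewrite /joins -surjective_pairing eqxx.
  suff -> : C (ends e).2 = C (ends e).1 by [].
  have adj_e' : connect (adjX ends X) (ends e).2 (ends e).1.
    by rewrite connectC; exact: connect1.
  by apply/idP/idP => Ce;
    [exact: connect_trans Ce adj_e' | exact: connect_trans Ce (connect1 adj_e)].
by rewrite -(big_morph double doubleD (erefl 0.*2)) odd_double.
Qed.

Lemma degree_star Z v u :
  all (fun e => incident ends e v) Z ->
  degree ends Z u = \sum_(e <- Z) ((v == u) + (opposite v e == u)).
Proof.
move=> /allP incZ; rewrite /degree big_seq [RHS]big_seq; apply: eq_bigr => e eZ.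
exact: joins_degree (joins_opposite (incZ e eZ)).
Qed.

(* If Y ⊎ Z is Eulerian and Z is an odd star at [v], then some edge of Z leads
   from [v] to a vertex already connected to [v] in G<Y>: otherwise the degree
   sum of Y ⊎ Z over the component of [v] in G<Y> would be odd. *)
Lemma odd_star_reaches Y Z v :
  all (fun e => incident ends e v) Z -> odd (size Z) -> eulerian ends (Y ++ Z) ->
  has (fun e => connect (adjX ends Y) v (opposite v e)) Z.
Proof.
move=> incZ oddZ eul; apply/negPn/negP => /hasPn unreached.
set C := connect (adjX ends Y) v.
have even_sum : ~~ odd (\sum_(u | C u) degree ends (Y ++ Z) u).
  apply: (big_ind (fun n => ~~ odd n)) => // [m n em en|u _].
    by rewrite oddD (negPf em) (negPf en).
  exact: eulerian_degree_even.
have star_sum : \sum_(u | C u) degree ends Z u = size Z.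
  rewrite (eq_bigr _ (fun u _ => degree_star u incZ)) exchange_big /= -sum1_size.
  rewrite big_seq [RHS]big_seq; apply: eq_bigr => e eZ.
  by rewrite big_split /= !sum_indicator /C connect0 (negPf (unreached e eZ)).
move: even_sum; rewrite (eq_bigr _ (fun u _ => degree_cat Y Z u)) big_split /=.
by rewrite star_sum oddD oddZ (negPf (handshake_component Y v)).
Qed.

(* [Y] can stand in for a path a1 - v - a2: it changes parities exactly at
   [a1] and [a2], uses no other vertex, and connects [a1] to [a2]. *)
Definition bypass (a1 a2 : V) (Y : seq E) : Prop :=
  [/\ forall u, odd (degree ends Y u) = odd ((a1 == u) + (a2 == u)),
      forall u, inVX ends Y u -> (a1 == u) || (a2 == u)
    & connect (adjX ends Y) a1 a2].

Lemma eulerian_splice R T Y e1 e2 v a1 a2 :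
  joins ends e1 v a1 -> joins ends e2 v a2 -> bypass a1 a2 Y ->
  connect (adjX ends (R ++ T)) v a1 ->
  eulerian ends (R ++ e1 :: e2 :: T) -> eulerian ends (R ++ Y ++ T).
Proof.
move=> j1 j2 [Ypar Yverts Yconn] va1 eul; apply: (eulerian_replace eul).
- move=> u; rewrite !inVX_cat => /or3P[Ru|/Yverts a12u|Tu]; rewrite ?Ru //.
  + apply/orP; right; apply/hasP.
    by case/orP: a12u => au; [exists e1 | exists e2];
      rewrite ?inE ?eqxx ?orbT // (joins_incident _ j1, joins_incident _ j2) au orbT.
  + by apply/orP; right; case/hasP: Tu => g gT ig; apply/hasP; exists g;
      rewrite ?inE ?gT ?orbT.
- move=> u; rewrite !degree_cat !degree_cons (joins_degree _ j1) (joins_degree _ j2).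
  have -> : degree ends R u + ((v == u) + (a1 == u) + ((v == u) + (a2 == u)
      + degree ends T u)) = degree ends R u + ((a1 == u) + (a2 == u))
      + degree ends T u + 2 * (v == u) by lia.
  by rewrite [odd (_ + 2 * _)]oddD oddM addbF !oddD Ypar oddD !addbA.
- have subRT : {subset R ++ T <= R ++ Y ++ T}.
    by move=> g; rewrite !mem_cat => /orP[]->; rewrite ?orbT.
  have subY : {subset Y <= R ++ Y ++ T} by move=> g gY; rewrite !mem_cat gY orbT.
  have va1' := connect_subset subRT va1.
  have a12 := connect_subset subY Yconn.
  move=> a b /hasP[g]; rewrite mem_cat !inE => /or4P[gR|/eqP->|/eqP->|gT] jg.
  + by apply: connect1; apply: joins_adjX jg; rewrite mem_cat gR.
  + by case: (joins_same_ends j1 jg) => [[-> ->]|[-> ->]]; rewrite // connectC.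
  + have va2 := connect_trans va1' a12.
    by case: (joins_same_ends j2 jg) => [[-> ->]|[-> ->]]; rewrite // connectC.
  + by apply: connect1; apply: joins_adjX jg; rewrite !mem_cat gT !orbT.
Qed.

End Multigraph.

Section Metric.
Variables (V E : finType) (ends : E -> V * V) (w : E -> nat).
Hypothesis metric_w : metric ends w.

(* In a metric instance, a path a1 - v - a2 has a bypass with at most one
   edge and no larger weight: empty if a1 = a2, else the edge a1 a2. *)
Lemma bypass_exists e1 e2 v a1 a2 :
  joins ends e1 v a1 -> joins ends e2 v a2 ->
  exists Y, bypass ends a1 a2 Y /\ size Y < 2 /\ weight w Y <= w e1 + w e2.
Proof.
move=> j1 j2; have [complete triangle] := metric_w.
case: (eqVneq a1 a2) => [<-|a12].
  exists [::]; split; last by rewrite /weight big_nil.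
  split=> [u|//|]; last exact: connect0.
  by rewrite /degree big_nil addnn odd_double.
have [f jf] := complete _ _ a12.
exists [:: f]; split; last split=> //.
  split=> [u|u|]; last by apply: connect1; apply: joins_adjX jf; rewrite mem_head.
    by rewrite degree_cons (joins_degree _ jf) /degree big_nil addn0.
  by rewrite /inVX /= orbF (joins_incident _ jf).
rewrite /weight big_cons big_nil addn0; apply: (triangle a1 v a2) => //.
by rewrite /joins orbC.
Qed.

Lemma shortcut_pair R T e1 e2 v :
  incident ends e1 v -> incident ends e2 v ->
  connect (adjX ends (R ++ T)) v (opposite ends v e1) ->
  eulerian ends (R ++ e1 :: e2 :: T) ->
  exists Y, eulerian ends (R ++ Y ++ T) /\ size Y < 2 /\
            weight w Y <= w e1 + w e2.
Proof.
move=> /joins_opposite j1 /joins_opposite j2 reach eul.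
have [Y [bY [sY wY]]] := bypass_exists j1 j2.
by exists Y; split=> //; apply: eulerian_splice j1 j2 bY reach eul.
Qed.

End Metric.

Lemma three_satisfying (T : eqType) (p : pred T) (s : seq T) :
  2 < count p s ->
  exists Z rest, [/\ perm_eq s (Z ++ rest), size Z = 3 & all p Z].
Proof.
move=> three; exists (take 3 (filter p s)), (drop 3 (filter p s) ++ filter (predC p) s).
split; last by apply/allP => x /mem_take; rewrite mem_filter => /andP[].
  by rewrite catA cat_take_drop perm_sym perm_filterC.
by rewrite size_takel // size_filter.
Qed.

Theorem mainTheorem7 (V E : finType) (ends : E -> V * V) (w : E -> nat)
  (R S : seq E) :
  parallel_equal_weight ends w ->
  R != [::] ->
  metric ends w ->
  edge_minimizing ends w R S ->
  forall v : V, count (fun e => incident ends e v) S <= 2.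
Proof.
move=> _ _ metric_w [eulS minS] v; rewrite leqNgt; apply/negP => /three_satisfying.
case=> Z [rest [SZ sizeZ incZ]].
have eulZ : eulerian ends ((R ++ rest) ++ Z).
  by apply: eulerian_perm eulS; rewrite -catA perm_cat2l (permPl SZ) perm_catC.
have oddZ : odd (size Z) by rewrite sizeZ.
have /hasP[e eZ reach] := odd_star_reaches incZ oddZ eulZ.
have [f fZ'] : exists f, f \in rem e Z.
  move: (size_rem eZ); rewrite sizeZ.
  by case: (rem e Z) => // f ? _; exists f; rewrite mem_head.
set T := rem f (rem e Z) ++ rest.
have ST : perm_eq S [:: e, f & T].
  have Zef : perm_eq Z [:: e, f & rem f (rem e Z)].
    by rewrite (permPl (perm_to_rem eZ)) perm_cons perm_to_rem.
  by apply: perm_trans SZ _; rewrite /T -!cat_cons perm_cat2r.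
have inc g : g \in Z -> incident ends g v by move=> gZ; exact: (allP incZ).
have [Y [eulY [sizeY weightY]]] : exists Y, eulerian ends (R ++ Y ++ T) /\
    size Y < 2 /\ weight w Y <= w e + w f.
  apply: (shortcut_pair metric_w (inc _ eZ) (inc _ (mem_rem fZ'))).
    by apply: connect_subset reach => g; rewrite !mem_cat => /orP[]->; rewrite ?orbT.
  by apply: eulerian_perm eulS; rewrite perm_cat2l.
have weightS : weight w S = w e + w f + weight w T.
  by rewrite /weight (perm_big _ ST) !big_cons /= addnA.
have weightYT : weight w (Y ++ T) = weight w Y + weight w T by rewrite /weight big_cat.
apply: minS; exists (Y ++ T); split; first exact: eulY.
rewrite (perm_size ST) size_cat weightS weightYT /= -addn2 addnC ltn_add2l.
by rewrite leq_add2r.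
Qed.
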